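(* Let $G$ be a network whose underlying simple graph is a cactus. Then $R_G(q)$ is Schur quasi-stable, i.e. every complex zero $q$ of $R_G$ satisfies $|q|\le1$.
   Context: A network is a finite connected loopless multigraph, possibly with multiple edges. $R_G(q)$ is the probability that deleting each edge independently with probability $q$ leaves a connected spanning subgraph; it is a polynomial in $q$. The underlying simple graph has the same vertices and one edge for each adjacent pair. A cactus is a connected simple graph in which each edge lies in at most one cycle. *)

From HB Require Import structures.
From mathcomp Require Import all_boot all_order all_algebra all_field.
Set Implicit Arguments. Unset Strict Implicit. Unset Printing Implicit Defensive.
Import Order.TTheory GRing.Theory Num.Theory.

(* A multigraph on vertex type V with edge type E: each edge e has
   endpoints src e and tgt e (orientation is irrelevant). *)

Definition joined (V E : finType) (src tgt : E -> V) (S : {set E}) (u v : V) : bool :=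
  [exists e in S, ((src e == u) && (tgt e == v)) || ((src e == v) && (tgt e == u))].

Definition spanning_connected (V E : finType) (src tgt : E -> V) (S : {set E}) : bool :=
  [forall u : V, forall v : V, connect (joined src tgt S) u v].

Definition network (V E : finType) (src tgt : E -> V) : Prop :=
  [/\ 0 < #|V|, (forall e, src e != tgt e) & spanning_connected src tgt setT].

Definition simple_adj (V E : finType) (src tgt : E -> V) : rel V :=
  fun u v => (u != v) && joined src tgt setT u v.

Definition is_graph_cycle (V : finType) (adj : rel V) (p : seq V) : Prop :=
  [/\ uniq p, 2 < size p & cycle adj p].

Definition cycle_edge (V : finType) (p : seq V) (x y : V) : bool :=
  ((x \in p) && (next p x == y)) || ((y \in p) && (next p y == x)).

(* cactus: connected simple graph in which each edge lies in at most one
   cycle (cycles being identified with their edge sets) *)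
Definition cactus (V : finType) (adj : rel V) : Prop :=
  [/\ 0 < #|V|, symmetric adj, irreflexive adj,
      (forall u v, connect adj u v) &
      forall p1 p2 : seq V, is_graph_cycle adj p1 -> is_graph_cycle adj p2 ->
      forall u v, cycle_edge p1 u v -> cycle_edge p2 u v ->
      forall x y, cycle_edge p1 x y = cycle_edge p2 x y].

Local Open Scope ring_scope.

(* reliability polynomial R_G(q): each edge deleted independently with
   probability q; sum over the edge sets S of connected spanning subgraphs *)
Definition reliability (V E : finType) (src tgt : E -> V) : {poly algC} :=
  \sum_(S : {set E} | spanning_connected src tgt S)
     'X ^+ #|~: S| * (1 - 'X) ^+ #|S|.

From HB Require Import structures.
From mathcomp Require Import all_boot all_order all_algebra all_field.
From mathcomp Require Import ring boolp.
Import Order.TTheory GRing.Theory Num.Theory.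

(* Parallel edges joining the same two vertices are all deleted with probability q^m,
   independently for distinct pairs. In a cactus, a spanning subgraph is connected iff every
   simple edge whose parallel class is deleted entirely lies on a cycle, and no cycle loses two
   such edges. Grouping the terms of R_G by the set of wholly deleted classes thus gives
     R_G(q) = prod_k (1 - q^(m_k)) * prod_C (1 + sum_(k in C) q^(m_k) / (1 - q^(m_k))),
   C ranging over the cycles. If |q| > 1, no factor 1 - q^m vanishes, and w = r / (1 - r) with
   |r| > 1 satisfies Re (2 w + 1) = Re ((1 + r) / (1 - r)) < 0. As a cycle has n >= 3 edges,
   2 (1 + sum_C w) = (2 - n) + sum_C (2 w + 1) has negative real part, so R_G(q) <> 0. *)

Set Implicit Arguments. Unset Strict Implicit. Unset Printing Implicit Defensive.

Local Open Scope ring_scope.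

Lemma eq_set2 (T : finType) (a b x y : T) :
  ([set a; b] == [set x; y]) = ((a == x) && (b == y)) || ((a == y) && (b == x)).
Proof.
apply/eqP/idP => [/setP E|]; last by case/orP => /andP[/eqP-> /eqP->] //; rewrite setUC.
move: (E a) (E b) (E x) (E y); rewrite !inE !eqxx /= ?orbT.
by do ! (case: eqP => //= ?; subst).
Qed.

Lemma dinjectiveb_fibers (K I : finType) (f : K -> I) (D : {set K}) :
  dinjectiveb f D = [forall i, #|D :&: [set k | f k == i]| <= 1]%N.
Proof.
apply/dinjectiveP/forallP => [injf i | le1 x y xD yD fxy].
  apply/card_le1_eqP => x y; rewrite !inE => /andP[xD /eqP fx] /andP[yD /eqP fy].
  by apply: injf => //; rewrite fx fy.
by apply: (card_le1_eqP (le1 (f x))); rewrite !inE ?xD ?yD fxy eqxx.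
Qed.

Section SubsetSums.
Variable R : comPzSemiRingType.

Lemma prodr_natb (I : finType) (P : pred I) (b : I -> bool) :
  \prod_(i | P i) (b i)%:R = [forall (i | P i), b i]%:R :> R.
Proof.
have nat_of_andb : {morph nat_of_bool : x y / x && y >-> (x * y)%N} by move=> x y; rewrite mulnb.
by rewrite -natr_prod -big_andE (big_morph nat_of_bool nat_of_andb (erefl : nat_of_bool true = 1%N)).
Qed.

Lemma sum_set_prod_fibers (T I : finType) (pi : T -> I) (f : I -> {set T} -> R) :
  \sum_(S : {set T}) \prod_(i : I) f i (S :&: [set x | pi x == i]) =
  \prod_(i : I) \sum_(X : {set T} | X \subset [set x | pi x == i]) f i X.
Proof.
rewrite bigA_distr_big_dep.
pose fibers (S : {set T}) := [ffun i => S :&: [set x | pi x == i]].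
rewrite (reindex_onto (fun g : {ffun I -> {set T}} => \bigcup_i g i) fibers) /=; last first.
  move=> S _; apply/setP=> x; apply/bigcupP/idP => [[i _]|xS].
    by rewrite ffunE inE => /andP[].
  by exists (pi x) => //; rewrite ffunE !inE xS /=.
apply: eq_big => [g|g /eqP fibers_g]; last first.
  by apply: eq_bigr => i _; rewrite -{2}fibers_g ffunE.
apply/eqP/familyP => [<- i | gi_sub]; first by rewrite ffunE unfold_in subsetIr.
apply/ffunP=> i; rewrite ffunE; apply/setP=> x; rewrite !inE.
have fiber_g j y : y \in g j -> pi y = j.
  by move=> yg; have := subsetP (gi_sub j) y yg; rewrite inE => /eqP.
apply/andP/idP => [[/bigcupP[j _ xj] /eqP <-]|xi]; first by rewrite (fiber_g j x).
by rewrite (fiber_g i x xi) eqxx; split=> //; apply/bigcupP; exists i.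
Qed.

Lemma sum_set_prod_mem (T : finType) (F : T -> bool -> R) :
  \sum_(S : {set T}) \prod_(i : T) F i (i \in S) = \prod_(i : T) (F i true + F i false).
Proof.
under [RHS]eq_bigr do rewrite -big_bool.
rewrite (bigA_distr_bigA (fun i j => F i j)) /=.
rewrite (reindex (fun f : {ffun T -> bool} => [set x | f x])) /=.
  by apply: eq_bigr => f _; apply: eq_bigr => i _; rewrite inE.
exists (fun S : {set T} => [ffun x => x \in S]) => [f _|S _].
  by apply/ffunP => x; rewrite ffunE inE.
by apply/setP => x; rewrite inE ffunE.
Qed.

Lemma sum_subset_weights (T : finType) (B : {set T}) (a b : R) :
  \sum_(X : {set T} | X \subset B) \prod_(e in B) (if e \in X then a else b) =
  (a + b) ^+ #|B|.
Proof.
pose F i (c : bool) := if i \in B then (if c then a else b) else (~~ c)%:R.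
have prodF (X : {set T}) : \prod_i F i (i \in X) =
               (X \subset B)%:R * \prod_(e in B) (if e \in X then a else b).
  rewrite (bigID (fun i => i \in B)) /= mulrC; congr (_ * _); last first.
    by apply: eq_bigr => e eB; rewrite /F eB.
  rewrite (eq_bigr (fun e => (e \notin X)%:R)) => [|e /negbTE eB]; last by rewrite /F eB.
  rewrite prodr_natb; congr (nat_of_bool _)%:R.
  apply/forall_inP/idP => [notB | /subsetP sXB e]; last exact/contra/sXB.
  by apply/subsetP => e eX; apply: contraT => /notB; rewrite eX.
transitivity (\sum_(X : {set T}) \prod_i F i (i \in X)).
  rewrite big_mkcond; apply: eq_bigr => X _.
  by rewrite prodF; case: (X \subset B); rewrite ?mul1r ?mul0r.
rewrite sum_set_prod_mem (bigID (fun i => i \in B)) /= [X in _ * X]big1 => [|i /negbTE iB].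
  by rewrite mulr1 -prodr_const; apply: eq_bigr => i iB; rewrite /F iB.
by rewrite /F iB add0r.
Qed.

Lemma sum_subsets_card_le1 (K : finType) (A : {set K}) (s : K -> R) :
  \sum_(X : {set K} | (X \subset A) && (#|X| <= 1)%N) \prod_(k in X) s k =
  1 + \sum_(k in A) s k.
Proof.
rewrite (bigD1 set0) ?sub0set ?cards0 //= big_set0; congr (_ + _).
have -> : \sum_(k in A) s k = \sum_(X in set1 @: A) \prod_(k in X) s k.
  rewrite big_imset /=; last exact: in2W set1_inj.
  by apply: eq_bigr => k _; rewrite big_set1.
apply: eq_bigl => X; apply/andP/imsetP => [[/andP[XA le1] X0] | [k kA ->]].
  have /cards1P [k Xk] : #|X| == 1%N by rewrite eqn_leq le1 card_gt0.
  by exists k; rewrite // -sub1set -Xk.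
by rewrite sub1set kA -card_gt0 cards1.
Qed.

Lemma sum_partial_transversals (K I : finType) (f : K -> I) (C : {set K}) (s : K -> R) :
  \sum_(D : {set K} | (D \subset C) && dinjectiveb f D) \prod_(k in D) s k =
  \prod_(i : I) (1 + \sum_(k in C | f k == i) s k).
Proof.
pose fib i := [set k | f k == i].
pose g (_ : I) (X : {set K}) := ((X \subset C) && (#|X| <= 1)%N)%:R * \prod_(k in X) s k.
have sum_g i : \sum_(X : {set K} | X \subset fib i) g i X = 1 + \sum_(k in C | f k == i) s k.
  rewrite (eq_bigl (mem (C :&: fib i))) => [|k]; last by rewrite !inE.
  rewrite -sum_subsets_card_le1 big_mkcond [RHS]big_mkcond; apply: eq_bigr => X _.
  rewrite subsetI /g; case: (X \subset fib i); case: (X \subset C) => //=;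
    by case: (#|X| <= 1)%N; rewrite ?mul1r ?mul0r.
rewrite -(eq_bigr _ (fun i _ => sum_g i)) -sum_set_prod_fibers big_mkcond.
apply: eq_bigr => D _; rewrite big_split /= prodr_natb.
have -> : \prod_i \prod_(k in D :&: fib i) s k = \prod_(k in D) s k.
  rewrite [RHS](partition_big f predT) //=.
  by apply: eq_bigr => i _; apply: eq_bigl => k; rewrite !inE.
have -> : [forall i, (D :&: fib i \subset C) && (#|D :&: fib i| <= 1)%N] =
          (D \subset C) && dinjectiveb f D.
  rewrite dinjectiveb_fibers; apply/forallP/andP => [fibD | [DC /forallP le1] i].
    split; last by apply/forallP => i; have /andP[] := fibD i.
    apply/subsetP => k kD; have /andP[/subsetP + _] := fibD (f k).
    by apply; rewrite !inE kD eqxx.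
  by rewrite le1 andbT subIset ?DC.
by case: (_ && _); rewrite ?mul1r ?mul0r.
Qed.

End SubsetSums.

Section DeletedKeys.
Variables (R : comPzRingType) (T K : finType) (key : T -> K) (q : R).

Definition config_weight (S : {set T}) : R := \prod_e (if e \in S then 1 - q else q).

Definition bundle (k : K) : {set T} := [set e | key e == k].

Definition deleted_keys (S : {set T}) : {set K} :=
  [set k | (bundle k != set0) && [disjoint bundle k & S]].

(* The indicator keeps keys with an empty bundle, which are never deleted, at probability 0
   rather than q ^+ 0 = 1. *)
Definition deletion_prob (k : K) : R := (bundle k != set0)%:R * q ^+ #|bundle k|.

Lemma sum_bundle_subsets_deleted (k : K) (b : bool) :
  \sum_(X : {set T} | X \subset bundle k)
     (((bundle k != set0) && [disjoint bundle k & X]) == b)%:R *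
     \prod_(e in bundle k) (if e \in X then 1 - q else q) =
  if b then deletion_prob k else 1 - deletion_prob k.
Proof.
rewrite /deletion_prob; set B := bundle k.
have qB : \prod_(e in B) (if e \in set0 then 1 - q else q) = q ^+ #|B|.
  by rewrite -prodr_const; apply: eq_bigr => e _; rewrite inE.
rewrite (bigD1 set0) ?sub0set //= -setI_eq0 setI0 eqxx andbT qB.
rewrite (eq_bigr (fun X : {set T} =>
    (~~ b)%:R * \prod_(e in B) (if e \in X then 1 - q else q))); last first.
  move=> X /andP[/setIidPr XB X0].
  by rewrite -setI_eq0 XB (negbTE X0) andbF; case: b.
rewrite -mulr_sumr.
(* The subsets of B have total weight 1, the empty one weight q ^+ #|B|. *)
have := sum_subset_weights B (1 - q) q; rewrite subrK expr1n (bigD1 set0) ?sub0set //=.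
rewrite qB => /(canRL (addKr _)) ->.
by case: b; case: (B != set0) => /=; ring.
Qed.

Lemma sum_config_weight_deleted (D : {set K}) :
  \sum_(S | deleted_keys S == D) config_weight S =
  \prod_k (if k \in D then deletion_prob k else 1 - deletion_prob k).
Proof.
under eq_bigr => k _ do rewrite -(sum_bundle_subsets_deleted k (k \in D)).
rewrite -sum_set_prod_fibers big_mkcond; apply: eq_bigr => S _.
rewrite big_split /= prodr_natb.
have -> : [forall k, ((bundle k != set0) && [disjoint bundle k & S :&: bundle k])
             == (k \in D)] = (deleted_keys S == D).
  have disjB k : [disjoint bundle k & S :&: bundle k] = [disjoint bundle k & S].
    by rewrite -!setI_eq0 setIA setIAC setIid.
  apply/forallP/eqP => [sameD | <- k]; last by rewrite inE disjB.
  by apply/setP => k; rewrite -(eqP (sameD k)) inE disjB.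
case: (_ == D); rewrite ?mul0r ?mul1r //.
rewrite /config_weight (partition_big key predT) //=; apply: eq_bigr => k _.
by apply: eq_big => [e|e /eqP keyk]; rewrite ?inE // keyk eqxx andbT.
Qed.

Lemma sum_deleted_keys (phi : {set K} -> R) :
  \sum_(S : {set T}) phi (deleted_keys S) * config_weight S =
  \sum_(D : {set K}) phi D *
    \prod_k (if k \in D then deletion_prob k else 1 - deletion_prob k).
Proof.
rewrite (partition_big deleted_keys predT) //=; apply: eq_bigr => D _.
by rewrite -sum_config_weight_deleted mulr_sumr; apply: eq_bigr => S /eqP ->.
Qed.

End DeletedKeys.

Lemma prod_if_mem_div (F : fieldType) (K : finType) (D : {set K}) (r : K -> F) :
  (forall k, 1 - r k != 0) ->
  \prod_k (if k \in D then r k else 1 - r k) =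
  \prod_k (1 - r k) * \prod_(k in D) (r k / (1 - r k)).
Proof.
move=> r_neq1; rewrite [X in _ * X]big_mkcond -big_split /=; apply: eq_bigr => k _.
by case: (k \in D); rewrite ?mulr1 // mulrC divfK.
Qed.

Section LargeDeletionProb.
Variables (R : numDomainType) (T K : finType) (key : T -> K) (q : R).
Hypothesis q_gt1 : 1 < `|q|.

Lemma deletion_prob_gt1 k : bundle key k != set0 -> 1 < `|deletion_prob key q k|.
Proof.
by move=> Bk; rewrite /deletion_prob Bk mul1r normrX expr_gt1 ?normr_ge0 // card_gt0.
Qed.

Lemma one_sub_deletion_prob_neq0 k : 1 - deletion_prob key q k != 0.
Proof.
rewrite subr_eq0; case: (boolP (bundle key k != set0)) => [Bk | /negbTE Bk].
  by apply: contraTneq (deletion_prob_gt1 Bk) => <-; rewrite normr1 ltxx.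
by rewrite /deletion_prob Bk mul0r oner_neq0.
Qed.

End LargeDeletionProb.

Lemma Re_cayley_lt0 (r : algC) : 1 < `|r| -> 'Re ((1 + r) / (1 - r)) < 0.
Proof.
move=> r_gt1; have r_neq1 : 1 - r != 0.
  by rewrite subr_eq0; apply: contraTneq r_gt1 => <-; rewrite normr1 ltxx.
have [Re1 Im1] : 'Re 1 = 1 :> algC /\ 'Im 1 = 0 :> algC.
  by split; [apply/Creal_ReP | apply/Creal_ImP]; rewrite real1.
rewrite Re_div pmulr_llt0 ?invr_gt0 ?exprn_gt0 ?normr_gt0 //.
rewrite !raddfD !raddfN /= Re1 Im1.
have -> : (1 + 'Re r) * (1 - 'Re r) + (0 + 'Im r) * (0 - 'Im r) =
          1 - ('Re r ^+ 2 + 'Im r ^+ 2) by ring.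
by rewrite subr_lt0 -normC2_Re_Im expr_gt1 ?normr_ge0.
Qed.

Lemma one_add_sum_ratio_neq0 (K : finType) (A : {set K}) (r : K -> algC) :
  (1 < #|A|)%N -> (forall k, k \in A -> 1 < `|r k|) ->
  1 + \sum_(k in A) r k / (1 - r k) != 0.
Proof.
move=> A_gt1 r_gt1.
have cayley k : k \in A -> (1 + r k) / (1 - r k) = 2 * (r k / (1 - r k)) + 1.
  move=> /r_gt1 rk_gt1; field; rewrite subr_eq0.
  by apply: contraTneq rk_gt1 => <-; rewrite normr1 ltxx.
have double_sum : 2 * (1 + \sum_(k in A) r k / (1 - r k)) =
                  (2 - #|A|%:R) + \sum_(k in A) (1 + r k) / (1 - r k).
  by rewrite (eq_bigr _ cayley) big_split /= sumr_const -mulr_sumr; ring.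
have Re_neg : 'Re (2 * (1 + \sum_(k in A) r k / (1 - r k))) < 0.
  rewrite double_sum raddfD raddf_sum /= (Creal_ReP _ _); last first.
    by rewrite rpredB ?realn.
  have /card_gt0P [k kA] : (0 < #|A|)%N by apply: ltn_trans A_gt1.
  have Re_sum : \sum_(j in A) 'Re ((1 + r j) / (1 - r j)) < 0.
    have rest : \sum_(j in A | j != k) 'Re ((1 + r j) / (1 - r j)) <= 0.
      by apply: sumr_le0 => j /andP[jA _]; exact/ltW/Re_cayley_lt0/r_gt1.
    by rewrite (bigD1 k) //=; have := ltr_leD (Re_cayley_lt0 (r_gt1 k kA)) rest; rewrite addr0.
  have card_ge2 : 2 - #|A|%:R <= 0 :> algC by rewrite subr_le0 (ler_nat _ 2).
  by have := ler_ltD card_ge2 Re_sum; rewrite addr0.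
by apply: contraTneq Re_neg => ->; rewrite mulr0 raddf0 ltxx.
Qed.

Lemma next2_neq (T : eqType) (p : seq T) x : uniq p -> (2 < size p)%N -> x \in p ->
  next p x != x /\ next p (next p x) != x.
Proof.
move=> up sp xp; case: (rot_to xp) => i s rs.
have nextE : next p =1 next (x :: s) by move=> z; rewrite -rs next_rot.
have us : uniq (x :: s) by rewrite -rs rot_uniq.
have ss : (2 < size (x :: s))%N by rewrite -rs size_rot.
have := cycle_next us; rewrite !nextE.
case: s us ss {rs nextE} => [|y [|z s]] //= /and3P[xn yn _] _.
rewrite !inE !negb_or in xn *; case/andP: xn => xy /andP[xz _].
case/andP => /eqP -> /andP[/eqP -> _].
by rewrite eq_sym xy eq_sym xz.
Qed.

Lemma path_sub_notlast (T : eqType) (e1 e2 : rel T) x s :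
  uniq (x :: s) -> path e1 x s ->
  (forall y z, y != last x s -> e1 y z -> e2 y z) -> path e2 x s.
Proof.
elim: s x => //= y s IH x /andP[xys /andP[ys us]] /andP[exy ps] sub12.
apply/andP; split; last by apply: IH => //; rewrite /= ys.
by apply: sub12 exy; apply: contra xys => /eqP ->; apply: mem_last.
Qed.

Section Cycles.
Variables (T : finType) (a : rel T).

Lemma connect_around (e : rel T) (p : seq T) x : uniq p -> x \in p ->
  (forall y, y \in p -> y != x -> e y (next p y)) -> connect e (next p x) x.
Proof.
move=> up xp e_next.
pose step y z := (y \in p) && (next p y == z).
have cstep : cycle step p by apply: cycle_from_next => // y yp; rewrite /step yp eqxx.
have /connectP [s ps lx] := connect_cycle cstep (etrans (mem_next p x) xp) xp.
case: (shortenP ps) lx => s' ps' us' _ lx.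
apply/connectP; exists s' => //.
apply: (path_sub_notlast us' ps') => y z; rewrite -lx => yx /andP[yp /eqP <-].
exact: e_next.
Qed.

Lemma cycle_closing_edge (e : rel T) u v : subrel e a -> a v u -> u != v ->
  connect e u v -> ~~ e u v ->
  exists p, [/\ is_graph_cycle a p, v \in p, next p v = u &
            forall x, x \in p -> x != v -> e x (next p x)].
Proof.
move=> sub_ea avu uv /connectP [s ps lv] not_euv.
case: (shortenP ps) lv => s' ps' us' _ lv.
exists (u :: s'); split.
- split => //; last by rewrite /= rcons_path -lv avu andbT (sub_path sub_ea).
  case: s' ps' us' lv => [|y [|z s']] //=; first by move=> _ _ vu; rewrite vu eqxx in uv.
  by rewrite andbT => euy _ vy; rewrite vy euy in not_euv.
- by rewrite lv mem_last.
- by have := cycle_next us'; rewrite /= rcons_path -lv => /andP[_ /eqP].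
- pose e' x y := (x == v) || e x y.
  have ce : cycle e' (u :: s').
    rewrite /= rcons_path -lv /e' eqxx andbT.
    by apply: sub_path ps' => x y ->; rewrite orbT.
  by move=> x xp xv; have := next_cycle ce xp; rewrite /e' (negbTE xv).
Qed.

Definition cycle_keys (p : seq T) : {set {set T}} := [set [set x; next p x] | x in p].

Lemma cycle_edgeE p x y : cycle_edge p x y = ([set x; y] \in cycle_keys p).
Proof.
apply/idP/imsetP => [/orP[]/andP[xp /eqP <-]|[z zp /eqP]].
- by exists x.
- by exists y; rewrite // setUC.
rewrite eq_set2 /cycle_edge => /orP[]/andP[/eqP -> /eqP ->].
  by rewrite zp eqxx.
by rewrite zp eqxx orbT.
Qed.

Lemma cycle_keys_other p k : is_graph_cycle a p -> k \in cycle_keys p ->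
  exists2 k', k' \in cycle_keys p & k' != k.
Proof.
case=> up sp _ /imsetP[x xp ->].
have [n1 n2] := next2_neq up sp xp.
exists [set next p x; next p (next p x)].
  by apply/imsetP; exists (next p x); rewrite ?mem_next.
by rewrite eq_set2 eqxx (negbTE n1) (negbTE n2).
Qed.

Definition on_cycle (k : {set T}) : bool :=
  `[< exists p, is_graph_cycle a p /\ k \in cycle_keys p >].

Definition same_cycle (k k' : {set T}) : bool :=
  (k == k') ||
  `[< exists p, [/\ is_graph_cycle a p, k \in cycle_keys p & k' \in cycle_keys p] >].

(* In a cactus the blocks of the keys on cycles are the key sets of the cycles; any other key
   forms a block on its own. *)
Definition cycle_block (k : {set T}) : {set {set T}} := [set k' | same_cycle k k'].

End Cycles.

Section Cactus.
Variables (T : finType) (a : rel T).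
Hypothesis cactus_a : cactus a.

Lemma cactus_cycle_keys_eq p1 p2 k : is_graph_cycle a p1 -> is_graph_cycle a p2 ->
  k \in cycle_keys p1 -> k \in cycle_keys p2 -> cycle_keys p1 = cycle_keys p2.
Proof.
move=> c1 c2 /[dup] k1 /imsetP[x xp kx] k2.
have keysE p y z : ([set y; z] \in cycle_keys p) = cycle_edge p y z by rewrite cycle_edgeE.
have e1 : cycle_edge p1 x (next p1 x) by rewrite -keysE -kx.
have e2 : cycle_edge p2 x (next p1 x) by rewrite -keysE -kx.
case: cactus_a => _ _ _ _ /(_ p1 p2 c1 c2 _ _ e1 e2) same_edges.
by apply/setP => k'; apply/idP/idP => /[dup] /imsetP[y _ ->]; rewrite !keysE same_edges.
Qed.

Lemma same_cycle_sym : symmetric (same_cycle a).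
Proof.
move=> k k'; rewrite /same_cycle eq_sym; congr (_ || _).
by apply/asboolP/asboolP => -[p [cp kp k'p]]; exists p.
Qed.

Lemma same_cycle_trans : transitive (same_cycle a).
Proof.
move=> k2 k1 k3; rewrite /same_cycle; case: eqVneq => [->|_] //= s12.
case: eqVneq => [<-|_] //=; first by rewrite s12 orbT.
move: s12 => /asboolP[p [cp k1p k2p]] /asboolP[p' [cp' k2p' k3p']].
apply/orP; right; apply/asboolP; exists p; split => //.
by rewrite (cactus_cycle_keys_eq cp cp' k2p k2p').
Qed.

Lemma cycle_block_eq k k' : (cycle_block a k == cycle_block a k') = same_cycle a k k'.
Proof.
have same_refl k'' : same_cycle a k'' k'' by rewrite /same_cycle eqxx.
apply/eqP/idP => [blocks_eq | s_kk'].
  have : k' \in cycle_block a k' by rewrite inE same_refl.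
  by rewrite -blocks_eq inE.
apply/setP => k''; rewrite !inE; apply/idP/idP => [s_kk''|]; last exact: same_cycle_trans.
by apply: (@same_cycle_trans k) s_kk''; rewrite same_cycle_sym.
Qed.

Lemma on_cycle_block_gt1 k : on_cycle a k ->
  (1 < #|[set k' | on_cycle a k' & cycle_block a k' == cycle_block a k]|)%N.
Proof.
move=> /[dup] cyc_k /asboolP[p [cp kp]]; have [k' k'p k'k] := cycle_keys_other cp kp.
apply/card_gt1P; exists k', k; rewrite !inE eqxx cyc_k k'k cycle_block_eq /same_cycle.
split=> //; apply/andP; split; first by apply/asboolP; exists p.
by apply/orP; right; apply/asboolP; exists p.
Qed.

End Cactus.

Section Network.
Variables (V E : finType) (src tgt : E -> V).
Hypothesis loopless : forall e, src e != tgt e.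
Implicit Types (S : {set E}) (k : {set V}).

Local Notation adj := (simple_adj src tgt).

Definition endpoints (e : E) : {set V} := [set src e; tgt e].

Local Notation deleted := (deleted_keys endpoints).
Local Notation rho q := (deletion_prob endpoints q).
Local Notation cyclic := [set k | on_cycle adj k].

Lemma horner_reliability (q : algC) :
  (reliability src tgt).[q] =
  \sum_(S : {set E}) (spanning_connected src tgt S)%:R * config_weight q S.
Proof.
rewrite /reliability horner_sum big_mkcond /=; apply: eq_bigr => S _.
case: (spanning_connected src tgt S); rewrite ?mul0r ?mul1r //.
rewrite !hornerE /config_weight (bigID (fun e => e \in S)) /= mulrC -!prodr_const.
congr (_ * _); first by apply: eq_bigr => e ->.
by apply: eq_big => e; rewrite ?inE // => /negbTE ->.
Qed.

Lemma joinedE S u v : joined src tgt S u v = [exists e in S, endpoints e == [set u; v]].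
Proof. by apply: eq_existsb => e; rewrite /endpoints eq_set2. Qed.

Lemma joined_sym S : symmetric (joined src tgt S).
Proof. by move=> u v; rewrite !joinedE setUC. Qed.

Lemma joined_adj S : subrel (joined src tgt S) adj.
Proof.
move=> u v /existsP[e /andP[eS ends]]; apply/andP; split.
  by case/orP: ends => /andP[/eqP <- /eqP <-]; [|rewrite eq_sym]; apply: loopless.
by apply/existsP; exists e; rewrite inE.
Qed.

Lemma adj_sym : symmetric adj.
Proof. by move=> u v; rewrite /simple_adj eq_sym joined_sym. Qed.

Lemma spanning_connectedP S : (forall u v, connect adj u v) ->
  reflect (forall u v, adj u v -> connect (joined src tgt S) u v)
          (spanning_connected src tgt S).
Proof.
move=> conn_adj; apply: (iffP forallP) => [conn u v _ | conn_adj_S u].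
  by move/forallP: (conn u); apply.
by apply/forallP => v; apply: connect_sub (conn_adj u v).
Qed.

Lemma disjoint_bundle S k :
  [disjoint bundle endpoints k & S] = ~~ [exists e in S, endpoints e == k].
Proof.
apply/idP/existsPn => [disj e | none]; last first.
  rewrite disjoint_subset; apply/subsetP => e; rewrite !inE => ek; apply/negP => eS.
  by have := none e; rewrite eS ek.
apply/andP => -[eS ek]; have eB : e \in bundle endpoints k by rewrite inE.
by rewrite (disjointFr disj eB) in eS.
Qed.

Lemma deleted_notjoined S x y : [set x; y] \in deleted S -> ~~ joined src tgt S x y.
Proof. by rewrite inE disjoint_bundle joinedE => /andP[]. Qed.

Lemma deleted_set2 S u v : adj u v -> ([set u; v] \in deleted S) = ~~ joined src tgt S u v.
Proof.
case/andP => _ /existsP[e /andP[_ ends]]; rewrite inE disjoint_bundle -joinedE andb_idl //.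
by move=> _; apply/set0Pn; exists e; rewrite inE /endpoints eq_set2.
Qed.

Lemma deleted_key_edge S k : k \in deleted S ->
  exists u v, [/\ k = [set u; v], adj u v & ~~ joined src tgt S u v].
Proof.
move=> kD; have := kD; rewrite inE => /andP[/set0Pn [e]]; rewrite inE => /eqP ek _.
have kE : k = [set src e; tgt e] by rewrite -ek.
rewrite {ek}kE in kD *.
exists (src e), (tgt e); split => //; last exact: deleted_notjoined.
by apply: (@joined_adj setT); apply/existsP; exists e; rewrite inE !eqxx.
Qed.

Section CactusNetwork.
Hypothesis cactus_adj : cactus adj.

Let connected_adj u v : connect adj u v.
Proof. by case: cactus_adj => _ _ _ conn _; apply: conn. Qed.

Lemma deleted_key_cycle S k : spanning_connected src tgt S -> k \in deleted S ->
  exists p, [/\ is_graph_cycle adj p, k \in cycle_keys p &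
            {in cycle_keys p, forall k', k' \in deleted S -> k' = k}].
Proof.
move=> /(spanning_connectedP _ connected_adj) conn kD.
have [u [v [-> auv not_juv]]] := deleted_key_edge kD.
have avu : adj v u by rewrite adj_sym.
have [p [cp vp nv p_joined]] :=
  cycle_closing_edge (@joined_adj S) avu (proj1 (andP auv)) (conn u v auv) not_juv.
exists p; split => //; first by apply/imsetP; exists v => //; rewrite nv setUC.
move=> _ /imsetP[x xp ->] xD; case: (eqVneq x v) => [->|xv]; first by rewrite nv setUC.
by have := deleted_notjoined xD; rewrite p_joined.
Qed.

Lemma deleted_on_cycle S : spanning_connected src tgt S ->
  deleted S \subset cyclic.
Proof.
move=> conn; apply/subsetP => k kD; have [p [cp kp _]] := deleted_key_cycle conn kD.
by rewrite inE; apply/asboolP; exists p.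
Qed.

Lemma deleted_block_inj S : spanning_connected src tgt S ->
  dinjectiveb (cycle_block adj) (deleted S).
Proof.
move=> conn; apply/dinjectiveP => k k' kD k'D /eqP; rewrite cycle_block_eq //.
have [p [cp kp only_k]] := deleted_key_cycle conn kD.
rewrite /same_cycle => /orP[/eqP // | /asboolP[p' [cp' kp' k'p']]].
by apply/esym/only_k => //; rewrite (cactus_cycle_keys_eq cactus_adj cp cp' kp kp').
Qed.

Lemma connected_of_deleted S : deleted S \subset cyclic ->
  dinjectiveb (cycle_block adj) (deleted S) -> spanning_connected src tgt S.
Proof.
move=> /subsetP cycD /dinjectiveP injD.
apply/(spanning_connectedP _ connected_adj) => u v auv.
case: (boolP (joined src tgt S u v)) => [juv | not_juv]; first exact: connect1.
have kD : [set u; v] \in deleted S by rewrite deleted_set2.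
have := cycD _ kD; rewrite inE => /asboolP[p [[up sp cp] /imsetP[x xp kx]]].
rewrite kx in kD.
have around : connect (joined src tgt S) (next p x) x.
  apply: connect_around => // y yp yx; apply: contraT => not_jy.
  have yD : [set y; next p y] \in deleted S by rewrite deleted_set2 // (next_cycle cp yp).
  have same : cycle_block adj [set x; next p x] = cycle_block adj [set y; next p y].
    apply/eqP; rewrite cycle_block_eq //; apply/orP; right; apply/asboolP.
    by exists p; split => //; apply/imsetP; [exists x | exists y].
  have [_ nnx] := next2_neq up sp xp.
  move: (injD _ _ kD yD same) => /eqP; rewrite eq_set2.
  case/orP => /andP[/eqP xy /eqP nxy]; first by rewrite xy eqxx in yx.
  by rewrite nxy -xy eqxx in nnx.
move/eqP: kx; rewrite eq_set2 => /orP[]/andP[/eqP -> /eqP ->] //.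
by rewrite (sym_connect_sym (@joined_sym S)).
Qed.

Lemma spanning_connectedE S : spanning_connected src tgt S =
  (deleted S \subset cyclic) && dinjectiveb (cycle_block adj) (deleted S).
Proof.
apply/idP/andP => [conn | [cycD injD]]; last exact: connected_of_deleted.
by split; [apply: deleted_on_cycle | apply: deleted_block_inj].
Qed.

Lemma on_cycle_bundle k : on_cycle adj k -> bundle endpoints k != set0.
Proof.
move=> /asboolP[p [[_ _ cp] /imsetP[x xp ->]]].
have /andP[_ /existsP[e /andP[_ ends]]] := next_cycle cp xp.
by apply/set0Pn; exists e; rewrite inE /endpoints eq_set2.
Qed.

Lemma reliability_factor (q : algC) : (forall k, 1 - rho q k != 0) ->
  (reliability src tgt).[q] =
  \prod_k (1 - rho q k) *
  \prod_(B : {set {set V}})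
    (1 + \sum_(k in cyclic | cycle_block adj k == B) rho q k / (1 - rho q k)).
Proof.
move=> rho_neq1; rewrite horner_reliability.
pose transversal (D : {set {set V}}) := (D \subset cyclic) && dinjectiveb (cycle_block adj) D.
rewrite (eq_bigr (fun S => (transversal (deleted S))%:R * config_weight q S)) => [|S _];
  last by rewrite spanning_connectedE.
rewrite (sum_deleted_keys endpoints q (fun D => (transversal D)%:R)).
rewrite -sum_partial_transversals mulr_sumr [RHS]big_mkcond; apply: eq_bigr => D _.
by rewrite prod_if_mem_div // /transversal; case: (_ && _); rewrite ?mul1r ?mul0r ?mulr0.
Qed.

Lemma cycle_block_factor_neq0 (q : algC) B : 1 < `|q| ->
  1 + \sum_(k in cyclic | cycle_block adj k == B) rho q k / (1 - rho q k) != 0.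
Proof.
move=> q_gt1; set A := [set k | on_cycle adj k & cycle_block adj k == B].
rewrite (eq_bigl (mem A)) => [|k]; last by rewrite !inE.
have [-> | [k0 k0A]] := set_0Vmem A; first by rewrite big_set0 addr0 oner_neq0.
apply: one_add_sum_ratio_neq0 => [|k]; last first.
  by rewrite inE => /andP[cyc_k _]; apply/deletion_prob_gt1/on_cycle_bundle.
move: k0A; rewrite inE => /andP[cyc_k0 /eqP B_k0].
by rewrite /A -B_k0; apply: on_cycle_block_gt1 cyc_k0.
Qed.

End CactusNetwork.
End Network.

Unset Implicit Arguments.

Theorem corollary3p4 (V E : finType) (src tgt : E -> V) :
  network src tgt -> cactus (simple_adj src tgt) ->
  forall q : algC, root (reliability src tgt) q -> `|q| <= 1.
Proof.
move=> [_ loopless _] cactus_adj q; apply: contraTT => q_not_le1.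
have q_gt1 : 1 < `|q| by rewrite real_ltNge ?normr_real ?real1.
have rho_neq1 := one_sub_deletion_prob_neq0 (endpoints src tgt) q_gt1.
rewrite rootE (reliability_factor loopless cactus_adj rho_neq1).
apply: mulf_neq0; apply/prodf_neq0 => i _; first exact: rho_neq1.
exact: cycle_block_factor_neq0.
Qed.
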